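(* Let $l<u$ be real, let $\Delta Q$ be real with $0<\Delta Q\le u-l$, and let $\epsilon\ge0$, $0\le\delta<1$ with $\frac{e^\epsilon}{1-\delta}>1$. Let $b_0=\frac{\Delta Q}{\epsilon-\log(1-\delta)}$. Then $f$ is defined and continuous on $[b_0,\infty)$, and there exists a unique $b^*\in[b_0,f(b_0)]$ with $f(b^* )=b^*$. Moreover $b^*=b_0=f(b_0)$ if and only if $\Delta Q=u-l$.
   Context: For $b>0$ and $p\in[l,u]$, $C_p(b)= 1-\frac12\left(e^{-\frac{p-l}{b}}+e^{-\frac{u-p}{b}}\right)$ (the integral $\int_l^u\frac{1}{2b}e^{-|x-p|/b}dx$), and $\Delta C(b)=\frac{C_{l+\Delta Q}(b)}{C_l(b)}$. The map $f$ is defined for $b>0$ with $\epsilon-\log\Delta C(b)-\log(1-\delta)\neq 0$ by $f(b)=\frac{\Delta Q}{\epsilon-\log\Delta C(b)-\log(1-\delta)}$. *)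

From Stdlib Require Import Reals Lra.
Open Scope R_scope.

Definition Cp (l u p b : R) : R :=
  1 - / 2 * (exp (- ((p - l) / b)) + exp (- ((u - p) / b))).

Definition DeltaC (l u dQ b : R) : R := Cp l u (l + dQ) b / Cp l u l b.

Definition fden (l u dQ eps delta b : R) : R :=
  eps - ln (DeltaC l u dQ b) - ln (1 - delta).

Definition fmap (l u dQ eps delta b : R) : R := dQ / fden l u dQ eps delta b.

(* With x = exp(-dQ/b) and y = exp(-(u-l-dQ)/b), DeltaC(b) = (2-x-y)/(1-xy)
   = 1 + (1-x)(1-y)/(1-xy).  Hence 1 <= DeltaC(b) <= 2 - x < 1/x, i.e.
   0 <= log DeltaC(b) < dQ/b <= dQ/b0 for b >= b0, so the denominator of f lies
   in (0, dQ/b0] and f maps [b0, oo) into itself.  Both x and y increase with b,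
   which makes DeltaC antitone and f antitone.  A continuous antitone self-map of
   [b0, oo) has exactly one fixed point, found in [b0, f b0] by the intermediate
   value theorem; it equals b0 iff DeltaC(b0) = 1 iff y = 1 iff dQ = u - l. *)

From Stdlib Require Import Reals Lra.
From Coquelicot Require Import Coquelicot.
Open Scope R_scope.

Lemma continuity_pt_limit1_in (f : R -> R) (D : R -> Prop) (x : R) :
  continuity_pt f x -> limit1_in f D (f x) x.
Proof.
intros Hc e He; destruct (Hc e He) as [a [Ha Hf]].
exists a; split; [exact Ha|].
intros y [Dy Hy]; destruct (Req_dec y x) as [->|Hne].
- simpl; unfold R_dist; rewrite Rminus_diag, Rabs_R0; exact He.
- apply Hf; repeat split; auto.
Qed.

Lemma continuous_fixed_point (f : R -> R) (a b : R) : a <= b ->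
  (forall x, a <= x <= b -> continuity_pt f x) ->
  a <= f a -> f b <= b -> exists c, a <= c <= b /\ f c = c.
Proof.
intros Hab Hc Ha Hb.
destruct (Req_dec (f a) a) as [Ea|Na]; [exists a; split; [lra|exact Ea]|].
destruct (Req_dec (f b) b) as [Eb|Nb]; [exists b; split; [lra|exact Eb]|].
destruct (Ranalysis5.IVT_interv (fun x => x - f x) a b) as [c [Hcab Hfc]];
  try (simpl; lra).
- intros x Hx; apply continuity_pt_minus; [apply continuity_pt_id|auto].
- destruct Hab as [|E]; [assumption|subst; lra].
- exists c; split; [exact Hcab|simpl in Hfc; lra].
Qed.

Lemma antitone_fixed_point_unique (f : R -> R) (P : R -> Prop) (c d : R) :
  (forall x y, P x -> P y -> x <= y -> f y <= f x) ->
  P c -> P d -> f c = c -> f d = d -> c = d.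
Proof.
intros Hf Pc Pd Ec Ed; destruct (Rle_dec c d) as [Hcd|Hdc].
- pose proof (Hf c d Pc Pd Hcd); lra.
- pose proof (Hf d c Pd Pc ltac:(lra)); lra.
Qed.

Lemma Rdiv_le_contravar (k b1 b2 : R) : 0 <= k -> 0 < b1 -> b1 <= b2 -> k / b2 <= k / b1.
Proof.
intros; unfold Rdiv; apply Rmult_le_compat_l; [assumption|].
apply Rinv_le_contravar; lra.
Qed.

Lemma exp_neg_lt_1 (a : R) : 0 < a -> exp (- a) < 1.
Proof. intros; rewrite <- exp_0; apply exp_increasing; lra. Qed.

Lemma exp_neg_le_1 (a : R) : 0 <= a -> exp (- a) <= 1.
Proof.
intros [Ha|<-]; [left; now apply exp_neg_lt_1|rewrite Ropp_0, exp_0; lra].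
Qed.

Lemma exp_neg_div_le (k b1 b2 : R) :
  0 <= k -> 0 < b1 -> b1 <= b2 -> exp (- (k / b1)) <= exp (- (k / b2)).
Proof.
intros Hk H1 H12; destruct (Rdiv_le_contravar k b1 b2 Hk H1 H12) as [Hlt|Heq].
- left; apply exp_increasing; lra.
- rewrite Heq; lra.
Qed.

(* [2 - x < 1/x] for [0 < x < 1], since [x (2 - x) = 1 - (1 - x)^2]. *)
Lemma ln_2_sub_exp_neg_lt (a : R) : 0 < a -> ln (2 - exp (- a)) < a.
Proof.
intros Ha; pose proof (exp_neg_lt_1 a Ha); pose proof (exp_pos (- a)).
assert (Hinv : exp a * exp (- a) = 1) by (rewrite <- exp_plus, Rplus_opp_r; apply exp_0).
rewrite <- (ln_exp a) at 2; apply ln_increasing; nra.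
Qed.

Definition laplace_ratio (x y : R) : R := (2 - x - y) / (1 - x * y).

Section LaplaceRatio.

Variables x y : R.
Hypotheses (Hx : 0 < x < 1) (Hy : 0 < y <= 1).

Let Hden : 0 < 1 - x * y.
Proof. nra. Qed.

Lemma laplace_ratio_sub_1 : laplace_ratio x y - 1 = (1 - x) * (1 - y) / (1 - x * y).
Proof. unfold laplace_ratio; field; lra. Qed.

Lemma laplace_ratio_ge_1 : 1 <= laplace_ratio x y.
Proof.
pose proof laplace_ratio_sub_1.
assert (0 <= (1 - x) * (1 - y) / (1 - x * y))
  by (apply Rdiv_le_0_compat; [apply Rmult_le_pos|]; lra).
lra.
Qed.

Lemma laplace_ratio_gt_1 : y < 1 -> 1 < laplace_ratio x y.
Proof.
intros Hy1; pose proof laplace_ratio_sub_1.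
assert (0 < (1 - x) * (1 - y) / (1 - x * y))
  by (apply Rdiv_lt_0_compat; [apply Rmult_lt_0_compat|]; lra).
lra.
Qed.

Lemma laplace_ratio_le_2_sub : laplace_ratio x y <= 2 - x.
Proof.
unfold laplace_ratio; apply Rmult_le_reg_r with (1 - x * y); [exact Hden|].
unfold Rdiv; rewrite Rmult_assoc, Rinv_l by lra.
assert (0 <= y * ((1 - x) * (1 - x))) by (apply Rmult_le_pos; nra).
nra.
Qed.

End LaplaceRatio.

Lemma laplace_ratio_1_r (x : R) : x < 1 -> laplace_ratio x 1 = 1.
Proof. intros; unfold laplace_ratio; field; lra. Qed.

Lemma laplace_ratio_sym (x y : R) : laplace_ratio x y = laplace_ratio y x.
Proof. unfold laplace_ratio; f_equal; ring. Qed.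

Lemma laplace_ratio_antitone_l (x1 x2 y : R) :
  0 < x1 <= x2 -> x2 <= 1 -> 0 < y <= 1 -> x2 * y < 1 ->
  laplace_ratio x2 y <= laplace_ratio x1 y.
Proof.
intros Hx1 Hx2 Hy Hxy; unfold laplace_ratio.
assert (0 < 1 - x1 * y) by nra.
apply Rmult_le_reg_r with ((1 - x1 * y) * (1 - x2 * y)); [apply Rmult_lt_0_compat; lra|].
replace ((2 - x2 - y) / (1 - x2 * y) * ((1 - x1 * y) * (1 - x2 * y)))
  with ((2 - x2 - y) * (1 - x1 * y)) by (field; repeat split; nra).
replace ((2 - x1 - y) / (1 - x1 * y) * ((1 - x1 * y) * (1 - x2 * y)))
  with ((2 - x1 - y) * (1 - x2 * y)) by (field; repeat split; nra).
assert (0 <= (x2 - x1) * ((1 - y) * (1 - y))) by (apply Rmult_le_pos; nra).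
nra.
Qed.

Lemma laplace_ratio_antitone (x1 x2 y1 y2 : R) :
  0 < x1 <= x2 -> x2 < 1 -> 0 < y1 <= y2 -> y2 <= 1 ->
  laplace_ratio x2 y2 <= laplace_ratio x1 y1.
Proof.
intros; apply Rle_trans with (laplace_ratio x2 y1).
- rewrite (laplace_ratio_sym x2 y2), (laplace_ratio_sym x2 y1).
  apply laplace_ratio_antitone_l; nra.
- apply laplace_ratio_antitone_l; nra.
Qed.

Lemma Cp_l (l u b : R) : Cp l u l b = / 2 * (1 - exp (- ((u - l) / b))).
Proof.
unfold Cp; replace ((l - l) / b) with 0 by (unfold Rdiv; ring).
rewrite Ropp_0, exp_0; field.
Qed.

Lemma DeltaC_laplace_ratio (l u dQ b : R) : 0 < b ->
  DeltaC l u dQ b = laplace_ratio (exp (- (dQ / b))) (exp (- ((u - l - dQ) / b))).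
Proof.
intros Hb; unfold DeltaC, laplace_ratio; rewrite Cp_l; unfold Cp.
replace (l + dQ - l) with dQ by ring.
replace (u - (l + dQ)) with (u - l - dQ) by ring.
replace (exp (- ((u - l) / b)))
  with (exp (- (dQ / b)) * exp (- ((u - l - dQ) / b)))
  by (rewrite <- exp_plus; f_equal; field; lra).
set (xy := exp (- (dQ / b)) * exp (- ((u - l - dQ) / b))).
destruct (Req_dec (1 - xy) 0) as [E|N].
- rewrite E; unfold Rdiv; rewrite Rmult_0_r, !Rinv_0; ring.
- field; exact N.
Qed.

Section DeltaC.

Variables l u dQ : R.
Hypotheses (HdQ0 : 0 < dQ) (HdQ1 : dQ <= u - l).

Let exp_bounds (b : R) : 0 < b ->
  0 < exp (- (dQ / b)) < 1 /\ 0 < exp (- ((u - l - dQ) / b)) <= 1.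
Proof.
intros; repeat split; try apply exp_pos.
- apply exp_neg_lt_1, Rdiv_lt_0_compat; lra.
- apply exp_neg_le_1, Rdiv_le_0_compat; lra.
Qed.

Lemma DeltaC_ge_1 (b : R) : 0 < b -> 1 <= DeltaC l u dQ b.
Proof.
intros Hb; rewrite DeltaC_laplace_ratio by exact Hb.
destruct (exp_bounds b Hb); apply laplace_ratio_ge_1; assumption.
Qed.

Lemma ln_DeltaC_nonneg (b : R) : 0 < b -> 0 <= ln (DeltaC l u dQ b).
Proof. intros Hb; rewrite <- ln_1; apply ln_le; [lra|exact (DeltaC_ge_1 b Hb)]. Qed.

Lemma ln_DeltaC_lt (b : R) : 0 < b -> ln (DeltaC l u dQ b) < dQ / b.
Proof.
intros Hb; destruct (exp_bounds b Hb) as [Hx Hy].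
apply Rle_lt_trans with (ln (2 - exp (- (dQ / b)))).
- apply ln_le; [exact (Rlt_le_trans _ _ _ Rlt_0_1 (DeltaC_ge_1 b Hb))|].
  rewrite DeltaC_laplace_ratio by exact Hb; apply laplace_ratio_le_2_sub; assumption.
- apply ln_2_sub_exp_neg_lt, Rdiv_lt_0_compat; lra.
Qed.

Lemma DeltaC_antitone (b1 b2 : R) : 0 < b1 -> b1 <= b2 -> DeltaC l u dQ b2 <= DeltaC l u dQ b1.
Proof.
intros H1 H12; rewrite !DeltaC_laplace_ratio by lra.
destruct (exp_bounds b1 H1); destruct (exp_bounds b2 ltac:(lra)).
pose proof (exp_neg_div_le dQ b1 b2 ltac:(lra) H1 H12).
pose proof (exp_neg_div_le (u - l - dQ) b1 b2 ltac:(lra) H1 H12).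
apply laplace_ratio_antitone; lra.
Qed.

Lemma DeltaC_gt_1 (b : R) : 0 < b -> dQ < u - l -> 1 < DeltaC l u dQ b.
Proof.
intros Hb Hlt; rewrite DeltaC_laplace_ratio by exact Hb.
destruct (exp_bounds b Hb); apply laplace_ratio_gt_1; try assumption.
apply exp_neg_lt_1, Rdiv_lt_0_compat; lra.
Qed.

Lemma DeltaC_full_range (b : R) : 0 < b -> dQ = u - l -> DeltaC l u dQ b = 1.
Proof.
intros Hb E; rewrite DeltaC_laplace_ratio by exact Hb.
replace ((u - l - dQ) / b) with 0 by (rewrite E; field; lra).
rewrite Ropp_0, exp_0; apply laplace_ratio_1_r.
apply exp_neg_lt_1, Rdiv_lt_0_compat; lra.
Qed.

End DeltaC.

Lemma fmap_continuous_at (l u dQ eps delta b : R) :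
  0 < b -> l < u -> 0 < DeltaC l u dQ b -> fden l u dQ eps delta b <> 0 ->
  continuity_pt (fmap l u dQ eps delta) b.
Proof.
intros Hb Hlu HDC Hden.
assert (HCl : 0 < Cp l u l b).
{ rewrite Cp_l; pose proof (exp_neg_lt_1 ((u - l) / b)
    ltac:(apply Rdiv_lt_0_compat; lra)); lra. }
apply continuity_pt_filterlim, (@ex_derive_continuous R_AbsRing R_NormedModule).
unfold fmap, fden, DeltaC, Cp in *.
auto_derive; repeat split; auto; unfold Rdiv in *; lra.
Qed.

Lemma privacy_level_pos (eps delta : R) :
  delta < 1 -> exp eps / (1 - delta) > 1 -> 0 < eps - ln (1 - delta).
Proof.
intros Hd Hr.
assert (1 - delta < exp eps).
{ apply Rmult_gt_compat_r with (r := 1 - delta) in Hr; [|lra].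
  unfold Rdiv in Hr; rewrite Rmult_assoc, Rinv_l, Rmult_1_l, Rmult_1_r in Hr by lra; lra. }
rewrite <- (ln_exp eps) at 1; pose proof (ln_increasing (1 - delta) (exp eps)); lra.
Qed.

Section FixedPointMap.

Variables l u dQ eps delta : R.
Hypotheses (Hlu : l < u) (HdQ0 : 0 < dQ) (HdQ1 : dQ <= u - l)
  (HK : 0 < eps - ln (1 - delta)).

Let K := eps - ln (1 - delta).
Let b0 := dQ / K.
Let f := fmap l u dQ eps delta.

Let Hb0 : 0 < b0.
Proof. apply Rdiv_lt_0_compat; assumption. Qed.

Let fden_eq (b : R) : fden l u dQ eps delta b = K - ln (DeltaC l u dQ b).
Proof. unfold fden, K; ring. Qed.

Lemma fden_pos (b : R) : b0 <= b -> 0 < fden l u dQ eps delta b.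
Proof.
intros Hb; rewrite fden_eq; pose proof Hb0; pose proof (HK : 0 < K).
pose proof (ln_DeltaC_lt l u dQ HdQ0 HdQ1 b ltac:(lra)).
assert (dQ / b <= K) by (replace K with (dQ / b0) by (unfold b0; field; lra);
  apply Rdiv_le_contravar; lra).
lra.
Qed.

Lemma fmap_ge_b0 (b : R) : b0 <= b -> b0 <= f b.
Proof.
intros Hb; apply Rdiv_le_contravar; [lra|exact (fden_pos b Hb)|].
rewrite fden_eq; pose proof (ln_DeltaC_nonneg l u dQ HdQ0 HdQ1 b ltac:(lra)); lra.
Qed.

Lemma fmap_antitone (b1 b2 : R) : b0 <= b1 -> b1 <= b2 -> f b2 <= f b1.
Proof.
intros H1 H12; apply Rdiv_le_contravar; [lra|exact (fden_pos b1 H1)|].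
rewrite !fden_eq.
pose proof (DeltaC_antitone l u dQ HdQ0 HdQ1 b1 b2 ltac:(lra) H12).
pose proof (DeltaC_ge_1 l u dQ HdQ0 HdQ1 b2 ltac:(lra)).
pose proof (ln_le (DeltaC l u dQ b2) (DeltaC l u dQ b1) ltac:(lra) ltac:(lra)).
lra.
Qed.

Lemma fmap_continuous (b : R) : b0 <= b -> continuity_pt f b.
Proof.
intros Hb; apply fmap_continuous_at; try lra.
- pose proof (DeltaC_ge_1 l u dQ HdQ0 HdQ1 b ltac:(lra)); lra.
- pose proof (fden_pos b Hb); lra.
Qed.

Lemma fmap_full_range (b : R) : b0 <= b -> dQ = u - l -> f b = b0.
Proof.
intros Hb E; unfold f, fmap; rewrite fden_eq, DeltaC_full_range, ln_1 by (auto; lra).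
unfold b0; f_equal; ring.
Qed.

Lemma fmap_b0_fixed : f b0 = b0 -> dQ = u - l.
Proof.
intros E; destruct (Rle_lt_or_eq_dec dQ (u - l) HdQ1) as [Hlt|]; [exfalso|assumption].
pose proof (fden_pos b0 ltac:(lra)); pose proof (HK : 0 < K).
assert (Hden : fden l u dQ eps delta b0 = K).
{ replace (fden l u dQ eps delta b0) with (dQ / f b0)
    by (unfold f, fmap; field; split; lra).
  rewrite E; unfold b0; field; split; lra. }
rewrite fden_eq in Hden.
pose proof (DeltaC_gt_1 l u dQ HdQ0 HdQ1 b0 Hb0 Hlt).
pose proof (ln_increasing 1 (DeltaC l u dQ b0) Rlt_0_1 ltac:(lra)).
rewrite ln_1 in *; lra.
Qed.

End FixedPointMap.

Theorem theorem4p3 (l u dQ eps delta : R)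
  (Hlu : l < u) (HdQ0 : 0 < dQ) (HdQ1 : dQ <= u - l)
  (Heps : 0 <= eps) (Hd0 : 0 <= delta) (Hd1 : delta < 1)
  (Hratio : exp eps / (1 - delta) > 1) :
  let b0 := dQ / (eps - ln (1 - delta)) in
  let f := fmap l u dQ eps delta in
  (forall b, b0 <= b -> fden l u dQ eps delta b <> 0) /\
  (forall b, b0 <= b -> limit1_in f (fun x => b0 <= x) (f b) b) /\
  (exists bs,
     (b0 <= bs <= f b0 /\ f bs = bs) /\
     (forall b, b0 <= b <= f b0 -> f b = b -> b = bs) /\
     ((bs = b0 /\ b0 = f b0) <-> dQ = u - l)).
Proof.
intros b0 f.
pose proof (privacy_level_pos eps delta Hd1 Hratio) as HK.
pose proof (fmap_ge_b0 l u dQ eps delta HdQ0 HdQ1 HK) as Hge.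
pose proof (fmap_antitone l u dQ eps delta HdQ0 HdQ1 HK) as Hanti.
assert (Hb0 : b0 <= b0) by lra.
split; [intros b Hb; pose proof (fden_pos l u dQ eps delta HdQ0 HdQ1 HK b Hb); lra|].
split; [intros b Hb; apply continuity_pt_limit1_in, fmap_continuous; assumption|].
destruct (continuous_fixed_point f b0 (f b0) (Hge b0 Hb0)) as [bs [Hbs Hfix]].
{ intros x Hx; apply fmap_continuous; auto; exact (proj1 Hx). }
{ exact (Hge b0 Hb0). }
{ exact (Hanti b0 (f b0) Hb0 (Hge b0 Hb0)). }
exists bs; split; [split; assumption|split].
- intros b Hb Hfb; apply (antitone_fixed_point_unique f (fun x => b0 <= x)); auto; lra.
- split.
  + intros [_ E]; apply (fmap_b0_fixed l u dQ eps delta HdQ0 HdQ1 HK); auto.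
  + intros E.
    assert (Hconst : forall b, b0 <= b -> f b = b0)
      by (intros b Hb; apply fmap_full_range; assumption).
    rewrite <- Hfix; split; [|symmetry]; apply Hconst; lra.
Qed.
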